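(* For a two-port FAS ($N=2$) with correlation parameter $\mu=\mu_2\in(0,1)$, the level crossing rate of $|h_{\rm FAS}|=\max\{|h_1|,|h_2|\}$ at threshold $x_{\rm th}>0$ is $$L(x_{\rm th})=\frac{2\sqrt{2\pi}\, f_D\,x_{\rm th}}{\sigma ^{3}(1-\mu^{2})}\, e^{-\frac {x_{\rm th}^2}{\sigma ^{2}(1-\mu^2)}} \sum_{k=0}^{\infty} \frac{\left(\mu x_{\rm th}\right)^{2k}}{(k!)^2 \left( \sigma ^{2}(1-\mu^2) \right)^{k-1}}\,\gamma \!\left( k+1, \frac{x_{\rm th}^2}{\sigma ^{2}(1-\mu^2)} \right),$$ where $\gamma(\cdot,\cdot)$ is the lower incomplete Gamma function.
   Context: Two-port FAS channel model: $h_1=\sigma x_0+j\sigma y_0$, $h_2=\sigma(\sqrt{1-\mu^2}\,x_2+\mu x_0)+j\sigma(\sqrt{1-\mu^2}\,y_2+\mu y_0)$, with $x_0,x_2,y_0,y_2$ independent real Gaussian with mean $0$ and variance $1/2$, $\sigma>0$. The joint envelope density is $p_{|h_1|,|h_2|}(x_1,x_2)=\frac{4x_1x_2}{\sigma^4(1-\mu^2)}e^{-\frac{x_1^2+x_2^2}{\sigma^2(1-\mu^2)}}I_0\!\left(\frac{2\mu x_1x_2}{\sigma^2(1-\mu^2)}\right)$ for $x_1,x_2\ge0$, $I_0$ the zero-order modified Bessel function of the first kind. Level crossing rate: the time derivative $|\dot h_i|$ of each port envelope is modeled as zero-mean Gaussian with density $p_{|\dot h_i|}$ and variance $\pi^2\sigma^2f_D^2$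 ($f_D$ the maximum Doppler frequency); the joint density of derivative and value of the selected envelope is $p_{|\dot h|,|h|}(\dot x,x)=p_{|\dot h_1|}(\dot x)\int_0^x p_{|h_1|,|h_2|}(x,x_2)\,dx_2+p_{|\dot h_2|}(\dot x)\int_0^x p_{|h_1|,|h_2|}(x_1,x)\,dx_1$, and the LCR is $L(x_{\rm th})=\int_0^\infty \dot x\,p_{|\dot h|,|h|}(\dot x,x_{\rm th})\,d\dot x$. *)

From Stdlib Require Import Reals ZArith.
From Coquelicot Require Import Coquelicot.
Open Scope R_scope.

Definition besselI0 (z : R) : R :=
  Series (fun k : nat => (z / 2) ^ (2 * k) / (INR (fact k)) ^ 2).

(* Lower incomplete Gamma function gamma(n, x) = int_0^x t^(n-1) e^(-t) dt,
   for a positive integer first argument n (only gamma(k+1, .) is used). *)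
Definition lower_gamma (n : nat) (x : R) : R :=
  RInt (fun t => t ^ (n - 1) * exp (- t)) 0 x.

Definition gauss_pdf (v : R) (x : R) : R :=
  / sqrt (2 * PI * v) * exp (- (x ^ 2) / (2 * v)).

(* Joint density of (|h1|, |h2|) for x1, x2 >= 0. *)
Definition env_pdf (sigma mu x1 x2 : R) : R :=
  4 * x1 * x2 / (sigma ^ 4 * (1 - mu ^ 2))
  * exp (- (x1 ^ 2 + x2 ^ 2) / (sigma ^ 2 * (1 - mu ^ 2)))
  * besselI0 (2 * mu * x1 * x2 / (sigma ^ 2 * (1 - mu ^ 2))).

Definition deriv_pdf (sigma fD : R) (xd : R) : R :=
  gauss_pdf (PI ^ 2 * sigma ^ 2 * fD ^ 2) xd.

(* Joint density of derivative and value of the selected envelope max(|h1|,|h2|). *)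
Definition sel_joint_pdf (sigma mu fD xd x : R) : R :=
  deriv_pdf sigma fD xd * RInt (fun x2 => env_pdf sigma mu x x2) 0 x
  + deriv_pdf sigma fD xd * RInt (fun x1 => env_pdf sigma mu x1 x) 0 x.

Definition is_LCR (sigma mu fD xth L : R) : Prop :=
  is_RInt_gen (fun xd => xd * sel_joint_pdf sigma mu fD xd xth)
    (at_point 0) (Rbar_locally p_infty) L.

From Stdlib Require Import Reals ZArith Lra Lia FunctionalExtensionality.
From Coquelicot Require Import Coquelicot.
Open Scope R_scope.

(* Both terms of the joint density of the selected envelope are equal, by the
   symmetry of the joint envelope density, so the LCR is 2 I times the
   half-line first moment  int_0^oo t p(t) dt = pi sigma fD / sqrt(2 pi)  of
   the Gaussian derivative density, with I = int_0^x p(x, y) dy.  Expanding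
   I0 in its power series, whose tail is monotone in the argument and hence
   uniformly small on [0, x], I is integrated term by term; the substitution
   t = y^2 / a with a = sigma^2 (1 - mu^2) turns the k-th term into the lower
   incomplete Gamma function gamma(k + 1, x^2 / a). *)

Lemma sum_n_le_is_series (a : nat -> R) (l : R) :
  (forall k, 0 <= a k) -> is_series a l -> forall n, sum_n a n <= l.
Proof.
  intros Ha Hs n. apply is_lim_seq_incr_compare; [exact Hs|].
  intros m. rewrite sum_Sn. unfold plus; simpl. specialize (Ha (S m)). lra.
Qed.

Lemma sum_n_minus_R (p q : nat -> R) (n : nat) :
  sum_n (fun k => p k - q k) n = sum_n p n - sum_n q n.
Proof.
  induction n as [|n IH].
  - rewrite !sum_O. reflexivity.
  - rewrite !sum_Sn, IH. unfold plus; simpl. ring.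
Qed.

Lemma is_RInt_sum_n (u : nat -> R -> R) (I : nat -> R) (a b : R) :
  (forall k, is_RInt (u k) a b (I k)) ->
  forall n, is_RInt (fun y => sum_n (fun k => u k y) n) a b (sum_n I n).
Proof.
  intros Hu n. induction n as [|n IH].
  - rewrite sum_O. apply is_RInt_ext with (u 0%nat); [|apply Hu].
    intros y _. rewrite sum_O. reflexivity.
  - rewrite sum_Sn.
    apply is_RInt_ext with (fun y => plus (sum_n (fun k => u k y) n) (u (S n) y)).
    + intros y _. rewrite sum_Sn. reflexivity.
    + apply (is_RInt_plus (V:=R_NormedModule)); [exact IH|apply Hu].
Qed.

Lemma is_series_RInt_uniform (f : R -> R) (u : nat -> R -> R) (eps : nat -> R) (a b : R) :
  a <= b -> ex_RInt f a b -> (forall k, ex_RInt (u k) a b) -> is_lim_seq eps 0 ->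
  (forall n y, a <= y <= b -> Rabs (f y - sum_n (fun k => u k y) n) <= eps n) ->
  is_series (fun k => RInt (u k) a b) (RInt f a b).
Proof.
  intros Hab Hf Hu Heps Hbound.
  set (S n := sum_n (fun k => RInt (u k) a b) n).
  assert (HS : forall n, is_RInt (fun y => sum_n (fun k => u k y) n) a b (S n)).
  { apply is_RInt_sum_n. intros k. apply (RInt_correct (V:=R_CompleteNormedModule)), Hu. }
  assert (Herr : forall n, Rabs (RInt f a b - S n) <= (b - a) * eps n).
  { intros n. rewrite <- (is_RInt_unique _ _ _ _ (HS n)).
    rewrite <- (RInt_minus f) by (auto; eexists; apply HS).
    apply abs_RInt_le_const; auto.
    apply (ex_RInt_minus f); [exact Hf|eexists; apply HS]. }
  assert (H0 : is_lim_seq (fun n => RInt f a b - S n) 0).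
  { apply is_lim_seq_abs_0, is_lim_seq_le_le with (fun _ => 0) (fun n => (b - a) * eps n).
    - intros n. split; [apply Rabs_pos|apply Herr].
    - apply is_lim_seq_const.
    - replace (Finite 0) with (Rbar_mult (b - a) 0) by (simpl; f_equal; ring).
      apply is_lim_seq_scal_l, Heps. }
  change (is_lim_seq S (RInt f a b)).
  apply is_lim_seq_ext with (fun n => RInt f a b - (RInt f a b - S n)).
  { intros n. ring. }
  replace (Finite (RInt f a b)) with (Rbar_minus (RInt f a b) 0) by (simpl; f_equal; ring).
  apply is_lim_seq_minus'; [apply is_lim_seq_const|exact H0].
Qed.

Lemma ex_RInt_mul_ex_derive (g h : R -> R) (x : R) :
  0 <= x -> (forall y, 0 <= y <= x -> continuous g y) -> (forall y, ex_derive h y) ->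
  ex_RInt (fun y => g y * h y) 0 x.
Proof.
  intros Hx Hg Hh. apply (ex_RInt_continuous (V:=R_CompleteNormedModule)).
  rewrite Rmin_left, Rmax_right by exact Hx. intros y Hy.
  apply (continuous_mult (K:=R_AbsRing)); [now apply Hg|].
  apply (ex_derive_continuous (K:=R_AbsRing) (V:=R_NormedModule)), Hh.
Qed.

Definition besselI0_coef (k : nat) : R := / INR (fact k) ^ 2.

Lemma besselI0_coef_pos (k : nat) : 0 < besselI0_coef k.
Proof. apply Rinv_0_lt_compat, pow_lt, lt_0_INR, lt_O_fact. Qed.

Lemma CV_radius_besselI0_coef : CV_radius besselI0_coef = p_infty.
Proof.
  apply CV_radius_infinite_DAlembert.
  { intros n. apply Rgt_not_eq, besselI0_coef_pos. }
  apply is_lim_seq_ext with (fun n => / INR (S n) ^ 2).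
  { intros n. unfold besselI0_coef. rewrite fact_simpl, mult_INR.
    assert (0 < INR (S n)) by apply lt_0_INR, Nat.lt_0_succ.
    assert (0 < INR (fact n)) by apply lt_0_INR, lt_O_fact.
    rewrite Rabs_pos_eq.
    - field. lra.
    - apply Rlt_le, Rdiv_lt_0_compat; apply Rinv_0_lt_compat, pow_lt; nra. }
  replace (Finite 0) with (Rbar_inv p_infty) by reflexivity.
  apply is_lim_seq_inv; [|discriminate].
  apply is_lim_seq_le_p_loc with (fun n => INR (S n)).
  - apply filter_forall. intros n.
    assert (1 <= INR (S n)) by (apply (le_INR 1); lia). nra.
  - apply (is_lim_seq_incr_1 INR), is_lim_seq_INR.
Qed.

Lemma besselI0_PSeries (z : R) : besselI0 (2 * z) = PSeries besselI0_coef (z ^ 2).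
Proof.
  unfold besselI0, PSeries. apply Series_ext. intros k.
  replace (2 * z / 2) with z by field.
  rewrite pow_mult. unfold besselI0_coef, Rdiv. apply Rmult_comm.
Qed.

Lemma is_series_besselI0_coef (w : R) :
  is_series (fun k => besselI0_coef k * w ^ k) (PSeries besselI0_coef w).
Proof.
  apply is_pseries_R, PSeries_correct, CV_radius_inside.
  rewrite CV_radius_besselI0_coef. exact I.
Qed.

Lemma ex_derive_PSeries_besselI0_coef (w : R) : ex_derive (PSeries besselI0_coef) w.
Proof. apply ex_derive_PSeries. rewrite CV_radius_besselI0_coef. exact I. Qed.

Lemma ex_derive_besselI0 (z : R) : ex_derive besselI0 z.
Proof.
  apply ex_derive_ext with (fun z => PSeries besselI0_coef ((z / 2) ^ 2)).
  { intros t. rewrite <- besselI0_PSeries. f_equal. field. }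
  auto_derive. apply ex_derive_PSeries_besselI0_coef.
Qed.

Definition besselI0_tail (n : nat) (w : R) : R :=
  PSeries besselI0_coef w - sum_n (fun k => besselI0_coef k * w ^ k) n.

Lemma besselI0_tail_bounds (n : nat) (w1 w2 : R) :
  0 <= w1 <= w2 -> 0 <= besselI0_tail n w1 <= besselI0_tail n w2.
Proof.
  intros Hw. unfold besselI0_tail.
  assert (Hc := besselI0_coef_pos). split.
  - assert (H := sum_n_le_is_series _ _
      (fun k => Rmult_le_pos _ _ (Rlt_le _ _ (Hc k)) (pow_le _ k (proj1 Hw)))
      (is_series_besselI0_coef w1) n).
    lra.
  - assert (Hs := is_series_minus (V:=R_NormedModule)
      _ _ _ _ (is_series_besselI0_coef w2) (is_series_besselI0_coef w1)).
    assert (Hd : forall k, 0 <= besselI0_coef k * w2 ^ k - besselI0_coef k * w1 ^ k).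
    { intros k. assert (w1 ^ k <= w2 ^ k) by (apply pow_incr; lra).
      specialize (Hc k). nra. }
    assert (H := sum_n_le_is_series _ _ Hd Hs n).
    rewrite sum_n_minus_R in H. unfold minus, plus, opp in H; simpl in H. lra.
Qed.

Lemma is_lim_seq_besselI0_tail (w : R) : is_lim_seq (fun n => besselI0_tail n w) 0.
Proof.
  replace (Finite 0) with (Rbar_minus (PSeries besselI0_coef w) (PSeries besselI0_coef w))
    by (simpl; f_equal; ring).
  apply is_lim_seq_minus'; [apply is_lim_seq_const|apply is_series_besselI0_coef].
Qed.

Lemma is_series_RInt_mul_besselI0 (g : R -> R) (M b x : R) :
  0 <= x -> (forall y, 0 <= y <= x -> continuous g y) ->
  (forall y, 0 <= y <= x -> Rabs (g y) <= M) ->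
  is_series
    (fun k => besselI0_coef k * b ^ (2 * k) * RInt (fun y => g y * y ^ (2 * k)) 0 x)
    (RInt (fun y => g y * besselI0 (2 * (b * y))) 0 x).
Proof.
  intros Hx Hg HM.
  set (u k y := g y * (besselI0_coef k * ((b * y) ^ 2) ^ k)).
  rewrite (RInt_ext _ (fun y => g y * PSeries besselI0_coef ((b * y) ^ 2)))
    by (intros y _; rewrite besselI0_PSeries; reflexivity).
  apply is_series_ext with (fun k => RInt (u k) 0 x).
  { intros k. unfold u.
    rewrite (RInt_ext _ (fun y => scal (besselI0_coef k * b ^ (2 * k)) (g y * y ^ (2 * k)))).
    - apply (RInt_scal (V:=R_CompleteNormedModule)).
      apply ex_RInt_mul_ex_derive; auto. intros y. auto_derive. exact I.
    - intros y _. change (scal ?c ?z) with (c * z).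
      rewrite !pow_mult, !Rpow_mult_distr.
      match goal with |- ?l = ?r => change (@eq R l r) end. ring. }
  apply is_series_RInt_uniform with (fun n => M * besselI0_tail n ((b * x) ^ 2)).
  - exact Hx.
  - apply ex_RInt_mul_ex_derive; auto. intros y. auto_derive.
    apply ex_derive_PSeries_besselI0_coef.
  - intros k. apply ex_RInt_mul_ex_derive; auto. intros y. unfold u. auto_derive. exact I.
  - replace (Finite 0) with (Rbar_mult M 0) by (simpl; f_equal; ring).
    apply is_lim_seq_scal_l, is_lim_seq_besselI0_tail.
  - intros n y Hy.
    assert (Hsum : sum_n (fun k => u k y) n
                   = g y * sum_n (fun k => besselI0_coef k * ((b * y) ^ 2) ^ k) n).
    { apply (sum_n_mult_l (K:=R_Ring)). }
    rewrite Hsum, <- Rmult_minus_distr_l. fold (besselI0_tail n ((b * y) ^ 2)).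
    assert (Hw : 0 <= (b * y) ^ 2 <= (b * x) ^ 2).
    { split; [apply pow2_ge_0|]. rewrite !Rpow_mult_distr.
      apply Rmult_le_compat_l; [apply pow2_ge_0|apply pow_incr; lra]. }
    assert (Ht := besselI0_tail_bounds n _ _ Hw).
    rewrite Rabs_mult, (Rabs_pos_eq (besselI0_tail _ _)) by lra.
    apply Rmult_le_compat; try apply Rabs_pos; try lra. now apply HM.
Qed.

Lemma powerRZ_pred (a : R) (k : nat) : a <> 0 -> powerRZ a (Z.of_nat k - 1) = a ^ k / a.
Proof.
  intros Ha. unfold Z.sub. rewrite powerRZ_add, <- pow_powerRZ by exact Ha.
  simpl. field. exact Ha.
Qed.

Lemma exp_neg_sq_le_1 (a y : R) : 0 < a -> exp (- y ^ 2 / a) <= 1.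
Proof.
  intros Ha. rewrite <- exp_0.
  assert (Hy : - y ^ 2 / a <= 0).
  { assert (0 <= y ^ 2 / a)
      by (apply Rmult_le_pos; [apply pow2_ge_0|apply Rlt_le, Rinv_0_lt_compat, Ha]).
    replace (- y ^ 2 / a) with (- (y ^ 2 / a)) by (field; lra). lra. }
  destruct (Rle_lt_or_eq_dec _ _ Hy) as [Hlt|Heq].
  - left. apply exp_increasing, Hlt.
  - rewrite Heq. right. reflexivity.
Qed.

Lemma RInt_odd_pow_exp_neg_sq (a : R) (k : nat) (x : R) : 0 < a ->
  RInt (fun y => y * exp (- y ^ 2 / a) * y ^ (2 * k)) 0 x
  = a ^ S k / 2 * lower_gamma (S k) (x ^ 2 / a).
Proof.
  intros Ha. unfold lower_gamma. replace (S k - 1)%nat with k by lia.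
  set (f t := t ^ k * exp (- t)).
  assert (Hsubst := is_RInt_comp (V:=R_CompleteNormedModule) f
                      (fun y => y ^ 2 / a) (fun y => 2 * y / a) 0 x).
  cbv beta in Hsubst. replace (0 ^ 2 / a) with 0 in Hsubst by (field; lra).
  apply is_RInt_unique.
  apply is_RInt_ext with (fun y => scal (a ^ S k / 2) (scal (2 * y / a) (f (y ^ 2 / a)))).
  { intros y _. do 2 change (scal ?c ?z) with (c * z). unfold f.
    replace (- (y ^ 2 / a)) with (- y ^ 2 / a) by (field; lra).
    rewrite pow_mult.
    replace ((y ^ 2) ^ k) with ((y ^ 2 / a) ^ k * a ^ k)
      by (rewrite <- Rpow_mult_distr; f_equal; field; lra).
    match goal with |- ?l = ?r => change (@eq R l r) end.
    simpl. field. lra. }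
  apply (is_RInt_scal (V:=R_NormedModule)), Hsubst.
  - intros z _. unfold f. apply (ex_derive_continuous (K:=R_AbsRing) (V:=R_NormedModule)).
    auto_derive. exact I.
  - intros z _. split.
    + auto_derive; [exact I|]. field. lra.
    + apply (ex_derive_continuous (K:=R_AbsRing) (V:=R_NormedModule) (fun y => 2 * y / a)).
      auto_derive. exact I.
Qed.

Lemma is_series_lower_gamma_besselI0 (a c x : R) : 0 < a -> 0 <= x ->
  is_series
    (fun k => c ^ (2 * k) / (INR (fact k) ^ 2 * powerRZ a (Z.of_nat k - 1))
              * lower_gamma (S k) (x ^ 2 / a))
    (2 * RInt (fun y => y * exp (- y ^ 2 / a) * besselI0 (2 * c * y / a)) 0 x).
Proof.
  intros Ha Hx.
  assert (Hs := is_series_RInt_mul_besselI0 (fun y => y * exp (- y ^ 2 / a)) x (c / a) x Hx).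
  rewrite (RInt_ext _ (fun y => y * exp (- y ^ 2 / a) * besselI0 (2 * (c / a * y))))
    by (intros y _; do 2 f_equal; field; lra).
  eapply is_series_ext; [|apply (is_series_scal_l (V:=R_NormedModule) 2), Hs].
  - intros k. cbv beta.
    rewrite RInt_odd_pow_exp_neg_sq, powerRZ_pred by lra.
    assert (Hca : c ^ (2 * k) = (c / a) ^ (2 * k) * (a ^ k * a ^ k)).
    { rewrite <- pow_add. replace (k + k)%nat with (2 * k)%nat by lia.
      rewrite <- Rpow_mult_distr. f_equal. field. lra. }
    rewrite Hca. unfold besselI0_coef. change (a ^ S k) with (a * a ^ k).
    assert (a ^ k <> 0) by (apply pow_nonzero; lra).
    assert (INR (fact k) <> 0) by apply INR_fact_neq_0.
    change (scal ?c ?z) with (c * z).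
    match goal with |- ?l = ?r => change (@eq R l r) end.
    field. repeat split; auto; lra.
  - intros y _. apply (ex_derive_continuous (K:=R_AbsRing) (V:=R_NormedModule)).
    auto_derive. exact I.
  - intros y Hy.
    assert (He := exp_neg_sq_le_1 a y Ha).
    assert (0 < exp (- y ^ 2 / a)) by apply exp_pos.
    rewrite Rabs_pos_eq by nra. nra.
Qed.

Lemma Rbar_mult_pos_p_infty (c : R) : 0 < c -> Rbar_mult c p_infty = p_infty.
Proof.
  intros Hc. simpl. destruct (Rle_dec 0 c) as [H|H]; [|lra].
  destruct (Rle_lt_or_eq_dec 0 c H); [reflexivity|lra].
Qed.

Lemma is_lim_exp_neg_sq (c : R) : 0 < c -> is_lim (fun t => exp (- t ^ 2 / c)) p_infty 0.
Proof.
  intros Hc. apply is_lim_comp with m_infty.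
  - apply is_lim_exp_m.
  - apply is_lim_ext with (fun t => - (/ c * (t * t))).
    { intros t. field. lra. }
    change m_infty with (Rbar_opp p_infty). apply is_lim_opp.
    assert (Hsq : is_lim (fun t => t * t) p_infty (Rbar_mult p_infty p_infty))
      by (apply is_lim_mult; try apply is_lim_id; exact I).
    apply (is_lim_scal_l _ (/ c)) in Hsq.
    rewrite Rbar_mult_pos_p_infty in Hsq by (apply Rinv_0_lt_compat, Hc). exact Hsq.
  - apply filter_forall. intros t. discriminate.
Qed.

Lemma is_RInt_gen_half_gauss_moment (v : R) : 0 < v ->
  is_RInt_gen (fun t => t * gauss_pdf v t) (at_point 0) (Rbar_locally p_infty)
    (v / sqrt (2 * PI * v)).
Proof.
  intros Hv.
  assert (0 < sqrt (2 * PI * v)) by (apply sqrt_lt_R0; generalize PI_RGT_0; nra).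
  set (F t := - v / sqrt (2 * PI * v) * exp (- t ^ 2 / (2 * v))).
  assert (HF : Derive F = fun t => t * gauss_pdf v t).
  { apply functional_extensionality. intros t. apply is_derive_unique.
    unfold F, gauss_pdf. auto_derive; [exact I|].
    replace (- (t * (t * 1)) * / (2 * v)) with (- t ^ 2 / (2 * v)) by (field; lra).
    field. lra. }
  replace (v / sqrt (2 * PI * v)) with (0 - F 0).
  2:{ unfold F. replace (- 0 ^ 2 / (2 * v)) with 0 by (field; lra). rewrite exp_0. field. lra. }
  rewrite <- HF. apply is_RInt_gen_Derive.
  - apply filter_forall. intros _ t _. unfold F. auto_derive. exact I.
  - apply filter_forall. intros _ t _. rewrite HF.
    apply (ex_derive_continuous (K:=R_AbsRing) (V:=R_NormedModule)).
    unfold gauss_pdf. auto_derive. exact I.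
  - intros P HP. exact (locally_singleton _ _ HP).
  - change (is_lim F p_infty 0). unfold F.
    replace (Finite 0) with (Rbar_mult (- v / sqrt (2 * PI * v)) 0) by (simpl; f_equal; ring).
    apply is_lim_scal_l, is_lim_exp_neg_sq. lra.
Qed.

Lemma env_pdf_comm (sigma mu p q : R) : env_pdf sigma mu p q = env_pdf sigma mu q p.
Proof.
  unfold env_pdf.
  replace (p ^ 2 + q ^ 2) with (q ^ 2 + p ^ 2) by ring.
  replace (2 * mu * p * q) with (2 * mu * q * p) by ring.
  replace (4 * p * q) with (4 * q * p) by ring.
  reflexivity.
Qed.

Lemma RInt_env_pdf_l (sigma mu x : R) : 0 < sigma ^ 2 * (1 - mu ^ 2) -> 0 <= x ->
  RInt (fun y => env_pdf sigma mu x y) 0 x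
  = 4 * x / (sigma ^ 4 * (1 - mu ^ 2)) * exp (- x ^ 2 / (sigma ^ 2 * (1 - mu ^ 2)))
    * RInt (fun y => y * exp (- y ^ 2 / (sigma ^ 2 * (1 - mu ^ 2)))
                     * besselI0 (2 * (mu * x) * y / (sigma ^ 2 * (1 - mu ^ 2)))) 0 x.
Proof.
  intros Ha Hx. set (a := sigma ^ 2 * (1 - mu ^ 2)) in *.
  rewrite <- (RInt_scal (V:=R_CompleteNormedModule)).
  - apply RInt_ext. intros y _. change (scal ?c ?z) with (c * z). unfold env_pdf. fold a.
    replace (- (x ^ 2 + y ^ 2) / a) with (- x ^ 2 / a + - y ^ 2 / a) by (field; lra).
    rewrite exp_plus. replace (2 * (mu * x) * y) with (2 * mu * x * y) by ring.
    match goal with |- ?l = ?r => change (@eq R l r) end. unfold Rdiv. ring.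
  - apply ex_RInt_mul_ex_derive; [exact Hx| |].
    + intros y _. apply (ex_derive_continuous (K:=R_AbsRing) (V:=R_NormedModule)).
      auto_derive. exact I.
    + intros y. auto_derive. apply ex_derive_besselI0.
Qed.

Lemma is_LCR_inner_integral (sigma mu fD x : R) : 0 < sigma -> 0 < fD ->
  is_LCR sigma mu fD x
    (2 * RInt (fun y => env_pdf sigma mu x y) 0 x * (PI * sigma * fD / sqrt (2 * PI))).
Proof.
  intros Hs Hf. unfold is_LCR.
  set (v := PI ^ 2 * sigma ^ 2 * fD ^ 2).
  set (I := RInt (fun y => env_pdf sigma mu x y) 0 x).
  assert (HP := PI_RGT_0).
  assert (Hv : 0 < v)
    by (unfold v; apply Rmult_lt_0_compat; [apply Rmult_lt_0_compat|]; apply pow_lt; lra).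
  apply is_RInt_gen_ext with (fun t => scal (2 * I) (t * gauss_pdf v t)).
  { apply filter_forall. intros _ t _. unfold sel_joint_pdf, deriv_pdf. fold v.
    rewrite (RInt_ext (fun x1 => env_pdf sigma mu x1 x) (fun y => env_pdf sigma mu x y))
      by (intros y _; apply env_pdf_comm).
    fold I. change (scal ?c ?z) with (c * z).
    match goal with |- ?l = ?r => change (@eq R l r) end. ring. }
  replace (2 * I * (PI * sigma * fD / sqrt (2 * PI))) with (scal (2 * I) (v / sqrt (2 * PI * v))).
  { apply (is_RInt_gen_scal (V:=R_NormedModule)), is_RInt_gen_half_gauss_moment, Hv. }
  change (scal ?c ?z) with (c * z).
  match goal with |- ?l = ?r => change (@eq R l r) end.
  replace (2 * PI * v) with (2 * PI * (PI * sigma * fD) ^ 2) by (unfold v; ring).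
  assert (0 <= PI * sigma * fD) by (apply Rmult_le_pos; [apply Rmult_le_pos|]; lra).
  rewrite sqrt_mult_alt, sqrt_pow2 by lra.
  assert (0 < sqrt (2 * PI)) by (apply sqrt_lt_R0; lra).
  unfold v. field. lra.
Qed.

Theorem corollary3 (sigma mu fD xth : R)
  (Hsigma : 0 < sigma) (Hmu0 : 0 < mu) (Hmu1 : mu < 1)
  (HfD : 0 < fD) (Hxth : 0 < xth) :
  is_LCR sigma mu fD xth
    (2 * sqrt (2 * PI) * fD * xth / (sigma ^ 3 * (1 - mu ^ 2))
     * exp (- (xth ^ 2) / (sigma ^ 2 * (1 - mu ^ 2)))
     * Series (fun k : nat =>
         (mu * xth) ^ (2 * k)
         / ((INR (fact k)) ^ 2 * powerRZ (sigma ^ 2 * (1 - mu ^ 2)) (Z.of_nat k - 1))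
         * lower_gamma (S k) (xth ^ 2 / (sigma ^ 2 * (1 - mu ^ 2))))).
Proof.
  assert (Hmu : 0 < 1 - mu ^ 2) by nra.
  assert (Ha : 0 < sigma ^ 2 * (1 - mu ^ 2)) by (apply Rmult_lt_0_compat; [apply pow_lt|]; lra).
  assert (HL := is_LCR_inner_integral sigma mu fD xth Hsigma HfD).
  rewrite RInt_env_pdf_l in HL by lra.
  rewrite (is_series_unique _ _
             (is_series_lower_gamma_besselI0 _ (mu * xth) _ Ha (Rlt_le _ _ Hxth))).
  match goal with
  | HL : is_LCR _ _ _ _ ?L |- is_LCR _ _ _ _ ?L' => replace L' with L; [exact HL|]
  end.
  assert (HP := PI_RGT_0).
  set (s := sqrt (2 * PI)).
  assert (0 < s) by (apply sqrt_lt_R0; lra).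
  assert (s * s = 2 * PI) by (apply sqrt_sqrt; lra).
  replace PI with (s * s / 2) by lra.
  field. lra.
Qed.
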